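(* Let $G=(V,S,\sigma,w,\theta,\pi)$ be a restaking network with $\theta(s)>0$ for all $s\in S$. Suppose that for every validator $v\in V$ $$\sum_{s\in S}\frac{w(v,s)}{\sum_{v'\in V}w(v',s)}\cdot\frac{\pi(s)}{\theta(s)}<\sigma(v),$$ and for every service $s\in S$ $$\sum_{v\in V}w(v,s)>\frac{\pi(s)}{\theta(s)}.$$ Then there is no profitable attack in $G$ (equivalently, $G$ is cryptoeconomically secure).
   Context: A restaking network is a tuple $G=(V,S,\sigma,w,\theta,\pi)$ with finite nonempty validator set $V$, finite service set $S$, stake $\sigma:V\to\mathbb{R}_{>0}$, allocation $w:V\times S\to\mathbb{R}_{\ge0}$ with $w(v,s)\le\sigma(v)$, thresholds $\theta:S\to[0,1]$ and prizes $\pi:S\to\mathbb{R}_{>0}$. An attack is $\alpha:V\times S\to\mathbb{R}_{\ge0}$ with $\alpha(v,s)\le w(v,s)$. Attacked services: $S_\alpha=\{s:\sum_v\alpha(v,s)\ge\theta(s)\sum_v w(v,s)\}$. Validator cost $c_v(\alpha)=\min(\sigma(v),\sum_{s\in S_\alpha}\alpha(v,s))$, total cost $C(\alpha)=\sum_v c_v(\alpha)$, prize $\Pi(\alpha)=\sum_{s\in S_\alpha}\pi(s)$. The attack is profitable if $S_\alpha\ne\emptyset$ and $C(\alpha)\le\Pi(\alpha)$. (A network is cryptoeconomically secure iff no profitable attack exists.) *)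

From HB Require Import structures.
From mathcomp Require Import all_boot all_order all_algebra.
Set Implicit Arguments. Unset Strict Implicit. Unset Printing Implicit Defensive.
Import Order.TTheory GRing.Theory Num.Theory.
Local Open Scope ring_scope.

Section Restaking.
Variables (R : realFieldType) (V S : finType).

Definition restaking_network (sigma : V -> R) (w : V -> S -> R)
    (theta : S -> R) (pi : S -> R) : Prop :=
  (0 < #|V|)%N /\
  (forall v, 0 < sigma v) /\
  (forall v s, 0 <= w v s /\ w v s <= sigma v) /\
  (forall s, 0 <= theta s /\ theta s <= 1) /\
  (forall s, 0 < pi s).

Definition is_attack (w : V -> S -> R) (alpha : V -> S -> R) : Prop :=
  forall v s, 0 <= alpha v s /\ alpha v s <= w v s.

Definition attacked (w : V -> S -> R) (theta : S -> R) (alpha : V -> S -> R)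
    : {set S} :=
  [set s | theta s * (\sum_(v : V) w v s) <= \sum_(v : V) alpha v s].

Definition val_cost (sigma : V -> R) (w : V -> S -> R) (theta : S -> R)
    (alpha : V -> S -> R) (v : V) : R :=
  Num.min (sigma v) (\sum_(s in attacked w theta alpha) alpha v s).

Definition total_cost (sigma : V -> R) (w : V -> S -> R) (theta : S -> R)
    (alpha : V -> S -> R) : R :=
  \sum_(v : V) val_cost sigma w theta alpha v.

Definition prize (w : V -> S -> R) (theta : S -> R) (pi : S -> R)
    (alpha : V -> S -> R) : R :=
  \sum_(s in attacked w theta alpha) pi s.

Definition profitable (sigma : V -> R) (w : V -> S -> R) (theta : S -> R)
    (pi : S -> R) (alpha : V -> S -> R) : Prop :=
  attacked w theta alpha != set0 /\
  total_cost sigma w theta alpha <= prize w theta pi alpha.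

End Restaking.

From HB Require Import structures.
From mathcomp Require Import all_boot all_order all_algebra.
From mathcomp Require Import ring.
Import Order.TTheory GRing.Theory Num.Theory.
Local Open Scope ring_scope.

(* Charge every validator [v] the amount
   [charge v = sum_(s attacked) alpha(v,s) * pi(s) / (theta(s) W(s))],
   where [W(s)] is the total stake allocated to [s].  An attacked service
   receives at least [theta(s) W(s)] of attacking stake, so the charges add up
   to at least the prize.  The first hypothesis makes [charge v] smaller than
   [sigma v], the second makes every ratio [pi(s) / (theta(s) W(s))] smaller
   than 1, so [charge v] is at most [v]'s attacking stake; hence
   [charge v <= c_v].  Some validator attacks an attacked service with
   positive stake, and for it the inequality is strict, so the total cost
   strictly exceeds the prize. *)

Lemma ltr_sum_le_lt {R : numDomainType} {I : finType} {P : pred I}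
    {F G : I -> R} {i0 : I} :
  P i0 -> (forall i, P i -> F i <= G i) -> F i0 < G i0 ->
  \sum_(i | P i) F i < \sum_(i | P i) G i.
Proof.
move=> Pi0 leFG ltFG0.
rewrite (bigD1 i0) //= [X in _ < X](bigD1 i0) //=.
by apply: ltr_leD => //; apply: ler_sum => i /andP[Pi _]; exact: leFG.
Qed.

Section ChargingArgument.

Variables (R : realFieldType) (V S : finType).
Variables (sigma : V -> R) (w : V -> S -> R) (theta pi : S -> R).
Variable alpha : V -> S -> R.

Hypothesis w_ge0 : forall v s, 0 <= w v s.
Hypothesis theta_gt0 : forall s, 0 < theta s.
Hypothesis pi_ge0 : forall s, 0 <= pi s.
Hypothesis weighted_prize_lt_stake : forall v,
  \sum_(s : S) (w v s / (\sum_(v' : V) w v' s)) * (pi s / theta s) < sigma v.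
Hypothesis scaled_prize_lt_allocation :
  forall s, pi s / theta s < \sum_(v : V) w v s.
Hypothesis alpha_attack : is_attack w alpha.

Let allocation s := \sum_(v : V) w v s.
Let A := attacked w theta alpha.

Definition prize_ratio s := pi s / theta s / allocation s.

Definition charge v := \sum_(s in A) alpha v s * prize_ratio s.

Lemma allocation_gt0 s : 0 < allocation s.
Proof.
apply: le_lt_trans (scaled_prize_lt_allocation s).
by rewrite divr_ge0 ?pi_ge0 ?ltW ?theta_gt0.
Qed.

Lemma prize_ratio_ge0 s : 0 <= prize_ratio s.
Proof. by rewrite !divr_ge0 ?pi_ge0 ?ltW ?theta_gt0 ?allocation_gt0. Qed.

Lemma prize_ratio_lt1 s : prize_ratio s < 1.
Proof. by rewrite ltr_pdivrMr ?allocation_gt0 // mul1r. Qed.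

Lemma attacked_stake s : s \in A -> theta s * allocation s <= \sum_v alpha v s.
Proof. by rewrite inE. Qed.

Lemma charge_lt_stake v : charge v < sigma v.
Proof.
apply: le_lt_trans (weighted_prize_lt_stake v).
have -> : \sum_s w v s / allocation s * (pi s / theta s)
          = \sum_s w v s * prize_ratio s.
  by apply: eq_bigr => s _; rewrite /prize_ratio mulrAC -mulrA mulrC.
apply: le_trans (_ : \sum_(s in A) w v s * prize_ratio s <= _).
  apply: ler_sum => s _; apply: ler_wpM2r; first exact: prize_ratio_ge0.
  exact: (alpha_attack v s).2.
rewrite [X in _ <= X](bigID (mem A)) /= lerDl.
by apply: sumr_ge0 => s _; rewrite mulr_ge0 ?prize_ratio_ge0.
Qed.

Lemma charged_le_attack v s : alpha v s * prize_ratio s <= alpha v s.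
Proof. by rewrite ler_piMr ?(alpha_attack v s).1 ?ltW ?prize_ratio_lt1. Qed.

Lemma charge_le_attack_stake v : charge v <= \sum_(s in A) alpha v s.
Proof. by apply: ler_sum => s _; exact: charged_le_attack. Qed.

Lemma charge_le_cost v : charge v <= val_cost sigma w theta alpha v.
Proof. by rewrite le_min (ltW (charge_lt_stake v)) charge_le_attack_stake. Qed.

Lemma charge_lt_cost v s :
  s \in A -> 0 < alpha v s -> charge v < val_cost sigma w theta alpha v.
Proof.
move=> sA alpha_gt0; rewrite lt_min charge_lt_stake /=.
apply: (ltr_sum_le_lt (P := mem A) sA) => [s' _|].
  exact: charged_le_attack.
by rewrite gtr_pMr ?prize_ratio_lt1.
Qed.

Lemma prize_le_total_charge : prize w theta pi alpha <= \sum_v charge v.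
Proof.
rewrite /charge exchange_big; apply: ler_sum => s sA; rewrite -big_distrl /=.
have -> : pi s = theta s * allocation s * prize_ratio s.
  have := theta_gt0 s; have := allocation_gt0 s.
  by rewrite /prize_ratio => ? ?; field; rewrite ?gt_eqF.
by rewrite ler_wpM2r ?prize_ratio_ge0 ?attacked_stake.
Qed.

Lemma attacked_has_attacker s : s \in A -> exists v, 0 < alpha v s.
Proof.
move=> sA; apply/existsP; rewrite -[[exists _, _]]negbK negb_exists.
apply/negP=> /forallP no_attacker; move: (attacked_stake s sA); apply/negP.
rewrite -ltNge; apply: le_lt_trans (_ : 0 < _).
  by apply: sumr_le0 => v _; rewrite leNgt no_attacker.
by rewrite mulr_gt0 ?allocation_gt0.
Qed.

Lemma prize_lt_total_cost :
  A != set0 -> prize w theta pi alpha < total_cost sigma w theta alpha.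
Proof.
case/set0Pn=> s sA; have [v0 alpha_gt0] := attacked_has_attacker s sA.
apply: le_lt_trans prize_le_total_charge _.
apply: (ltr_sum_le_lt (i0 := v0)) => // [v _|]; first exact: charge_le_cost.
exact: charge_lt_cost v0 s sA alpha_gt0.
Qed.

End ChargingArgument.

Theorem mainTheorem4 (R : realFieldType) (V S : finType)
    (sigma : V -> R) (w : V -> S -> R) (theta : S -> R) (pi : S -> R) :
  restaking_network sigma w theta pi ->
  (forall s, 0 < theta s) ->
  (forall v, \sum_(s : S) (w v s / (\sum_(v' : V) w v' s)) * (pi s / theta s)
             < sigma v) ->
  (forall s, pi s / theta s < \sum_(v : V) w v s) ->
  forall alpha : V -> S -> R, is_attack w alpha ->
    ~ profitable sigma w theta pi alpha.
Proof.
move=> [_ [_ [w_bounds [_ pi_gt0]]]] theta_gt0 prize_lt_stake prize_lt_alloc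
  alpha alpha_attack [nonempty cost_le_prize].
have w_ge0 v s : 0 <= w v s by have [] := w_bounds v s.
have pi_ge0 s : 0 <= pi s by exact: ltW (pi_gt0 s).
have := @prize_lt_total_cost _ _ _ sigma _ _ _ _ w_ge0 theta_gt0 pi_ge0
  prize_lt_stake prize_lt_alloc alpha_attack nonempty.
by rewrite ltNge cost_le_prize.
Qed.
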